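(* For any $n\in\mathbb{N}$ with $n\geq2$, the language $({}_1L)\delta_R=\{(u,v)\delta_R: u,v\in L,\ 1u\equiv_{\mathrm{rps}_n}v\}$ is not regular, where $L=\bigcup_{B\subseteq\mathcal{A}_n}L^B$, with $L^\emptyset=\{\varepsilon\}$, $L^B=L^{(a_1)}\cdots L^{(a_k)}$ for $B=\{a_1<\cdots<a_k\}\neq\emptyset$, and $L^{(j)}=\{n\}^*\{n-1\}^*\cdots\{j+1\}^*\{j\}^+$ for $j\in\mathcal{A}_n$.
   Context: Let $\mathcal{A}_n=\{1<2<\cdots<n\}$. An rPS tableau is a finite (possibly empty) sequence of nonempty bottom-justified columns of boxes filled with positive integers, such that the entries of each column are weakly decreasing from top to bottom and the bottom entries of the columns form a strictly increasing sequence from left to right. Right insertion of a symbol $a$ into an rPS tableau $B$: if $a$ is strictly greater than every entry of the bottom row, append a new column consisting of $a$ at the right end; otherwise, let $z$ be the leftmost bottom-row entry with $z\geq a$ and put $a$ in a new box at the bottom of the column of $z$ (the previous entries of that column move up one box). For $w=w_1\cdots w_k$, $\mathfrak{R}_r(w)$ is obtained by starting with the empty tableau and right-inserting $w_1,\dots,w_k$ in order. $u\equiv_{\mathrm{rps}_n}v$ means $\mathfrak{R}_r(u)=\mathfrak{R}_r(v)$ for $u,v\in\mathcal{A}_n^*$. For the padding symbol $\$\notin\mathcal{A}_n$, $\delta_R:\mathcal{A}_n^*\times\mathcal{A}_n^*\to((\mathcal{A}_n\cup\{\$\})\times(\mathcal{A}_n\cup\{\$\}))^*$ sends $(u_1\cdots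 u_m,v_1\cdots v_p)$ to the word of pairs $(u_i,v_i)$ obtained after padding the shorter word on the right with $\$$'s to equal length. *)

From mathcomp Require Import all_boot.
Set Implicit Arguments. Unset Strict Implicit. Unset Printing Implicit Defensive.

(* Symbols of A_n = {1 < 2 < ... < n} are natural numbers 1..n. *)

(* An rPS tableau is a sequence of columns (left to right); each column is
   listed from BOTTOM to TOP, so the head of a column is its bottom entry. *)
Definition rps_tableau := seq (seq nat).

Fixpoint rps_rins (B : rps_tableau) (a : nat) : rps_tableau :=
  match B with
  | [::] => [:: [:: a]]
  | c :: B' => if a <= head 0 c then (a :: c) :: B' else c :: rps_rins B' a
  end.

Definition rps_Rr (w : seq nat) : rps_tableau := foldl rps_rins [::] w.

Definition rps_equiv (u v : seq nat) : Prop := rps_Rr u = rps_Rr v.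

Definition Lj (n j : nat) (w : seq nat) : Prop :=
  exists c : nat -> nat, 0 < c j /\
    w = flatten [seq nseq (c i) i | i <- rev (iota j (n.+1 - j))].

Definition LB (n : nat) (bs : seq nat) (w : seq nat) : Prop :=
  exists ws : seq (seq nat),
    size ws = size bs /\ w = flatten ws /\
    (forall i, i < size bs -> Lj n (nth 0 bs i) (nth [::] ws i)).

Definition Lang (n : nat) (w : seq nat) : Prop :=
  exists bs : seq nat, sorted ltn bs /\ all (fun a => 0 < a <= n) bs /\ LB n bs w.

(* The padding symbol $ is None; a letter a is Some a. *)
Definition padnth (u : seq nat) (i : nat) : option nat :=
  if i < size u then Some (nth 0 u i) else None.

Definition deltaR (u v : seq nat) : seq (option nat * option nat) :=
  mkseq (fun i => (padnth u i, padnth v i)) (maxn (size u) (size v)).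

Definition lang_1L_deltaR (n : nat) (w : seq (option nat * option nat)) : Prop :=
  exists u v, Lang n u /\ Lang n v /\ rps_equiv (1 :: u) v /\ w = deltaR u v.

Definition regular (Sigma : Type) (K : seq Sigma -> Prop) : Prop :=
  exists (Q : finType) (q0 : Q) (delta : Q -> Sigma -> Q) (F : pred Q),
    forall w, K w <-> F (foldl delta q0 w).

From mathcomp Require Import all_boot.
From mathcomp Require Import zify.

(* Take u = 2^a 1^b and v = 1^(a+1) 2^b, both in L.  Right insertion puts the
   leading 1 and the 1s of u in one column and the 2s in another, so R_r(1u)
   has columns 1^(b+1), 2^a while R_r(v) has columns 1^(a+1), 2^b: the pair
   belongs to the language iff a = b.  As 2^a and 1^a have the same length,
   (u,v)delta_R factors as (2^a,1^a)delta_R (1^b,1 2^b)delta_R, so the prefixes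
   (2^a,1^a)delta_R are pairwise inequivalent for the Myhill-Nerode relation. *)

Lemma not_regular_fooling (S : Type) (K : seq S -> Prop) (x y : nat -> seq S) :
  (forall a, K (x a ++ y a)) -> (forall a b, K (x a ++ y b) -> a = b) ->
  ~ regular K.
Proof.
move=> Kxy Kxy_eq [Q [q0 [delta [F accepts]]]].
pose state (i : 'I_#|Q|.+1) := foldl delta q0 (x i).
have /injectivePn [i [j ij state_ij]] : ~~ injectiveb state.
  apply/injectiveP => /leq_card; rewrite card_ord; lia.
have /accepts := Kxy j; rewrite foldl_cat -/(state j) -state_ij -foldl_cat.
by move=> /accepts /Kxy_eq eq_ij; rewrite -val_eqE /= eq_ij eqxx in ij.
Qed.

Lemma rps_rins_cat (B C : rps_tableau) a :
  all (fun c => head 0 c < a) B -> rps_rins (B ++ C) a = B ++ rps_rins C a.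
Proof.
elim: B => //= c B IH /andP [lt_ca ltB].
by rewrite leqNgt lt_ca IH.
Qed.

Lemma foldl_rins_nseq (B C : rps_tableau) a p r :
  all (fun c => head 0 c < a) B ->
  foldl rps_rins (B ++ nseq p.+1 a :: C) (nseq r a) = B ++ nseq (r + p).+1 a :: C.
Proof.
move=> ltB; elim: r p => //= r IH p.
by rewrite rps_rins_cat //= leqnn (IH p.+1) addnS.
Qed.

Lemma rps_Rr_1_2_1 p q :
  rps_Rr (1 :: nseq p.+1 2 ++ nseq q 1) = [:: nseq q.+1 1; nseq p.+1 2].
Proof.
rewrite /rps_Rr /= foldl_cat.
rewrite (foldl_rins_nseq [:: [:: 1]] [::] 2 0 p) //.
by rewrite (foldl_rins_nseq [::] _ 1 0 q) // !addn0.
Qed.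

Lemma rps_Rr_1_2 p q :
  rps_Rr (nseq p.+1 1 ++ nseq q.+1 2) = [:: nseq p.+1 1; nseq q.+1 2].
Proof.
rewrite /rps_Rr /= foldl_cat.
rewrite (foldl_rins_nseq [::] [::] 1 0 p) // addn0 /=.
by rewrite (foldl_rins_nseq [:: nseq p.+1 1] [::] 2 0 q) // addn0.
Qed.

Lemma rps_equiv_1_2 p q r s :
  rps_equiv (1 :: nseq p.+1 2 ++ nseq q 1) (nseq r.+1 1 ++ nseq s.+1 2) ->
  q = r /\ p = s.
Proof.
rewrite /rps_equiv rps_Rr_1_2_1 rps_Rr_1_2 => -[/(congr1 size) + /(congr1 size)].
rewrite !size_nseq; lia.
Qed.

Lemma flatten_nseq0 (c : nat -> nat) (s : seq nat) :
  {in s, forall i, c i = 0} -> flatten [seq nseq (c i) i | i <- s] = [::].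
Proof.
elim: s => //= i s IH c0.
by rewrite c0 ?mem_head // IH // => j sj; apply: c0; rewrite inE sj orbT.
Qed.

Lemma flatten_rev_iotaS (c : nat -> nat) j m :
  flatten [seq nseq (c i) i | i <- rev (iota j m.+1)] =
  flatten [seq nseq (c i) i | i <- rev (iota j.+1 m)] ++ nseq (c j) j.
Proof. by rewrite /= rev_cons -cats1 map_cat flatten_cat /= cats0. Qed.

Lemma Lj_nseq n j k : 0 < j <= n -> Lj n j (nseq k.+1 j).
Proof.
move=> j_in; exists (fun i => if i == j then k.+1 else 0); rewrite eqxx.
split=> //; have -> : n.+1 - j = (n - j).+1 by lia.
rewrite flatten_rev_iotaS eqxx flatten_nseq0 // => i.
by rewrite mem_rev mem_iota => /andP [lt_ji _]; rewrite gtn_eqF.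
Qed.

Lemma Lj_nseqS n j p q : j < n -> Lj n j (nseq p j.+1 ++ nseq q.+1 j).
Proof.
move=> lt_jn.
exists (fun i => if i == j then q.+1 else if i == j.+1 then p else 0).
rewrite eqxx; split=> //; have -> : n.+1 - j = (n - j.+1).+2 by lia.
rewrite !flatten_rev_iotaS flatten_nseq0 => [|i]; first by rewrite /= !eqxx gtn_eqF.
by rewrite mem_rev mem_iota => /andP [lt_ji _]; rewrite !gtn_eqF // ltnW.
Qed.

Lemma Lang_nseq21 n p q : 2 <= n -> Lang n (nseq p 2 ++ nseq q.+1 1).
Proof.
move=> n_ge2; exists [:: 1]; split=> //; split; first by rewrite /= andbT; lia.
exists [:: nseq p 2 ++ nseq q.+1 1]; split=> //; split; first by rewrite /= cats0.
by case=> // _; apply: Lj_nseqS.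
Qed.

Lemma Lang_nseq12 n p q : 2 <= n -> Lang n (nseq p.+1 1 ++ nseq q.+1 2).
Proof.
move=> n_ge2; exists [:: 1; 2]; split=> //; split; first by rewrite /= andbT; lia.
exists [:: nseq p.+1 1; nseq q.+1 2]; split=> //; split; first by rewrite /= cats0.
by case=> [|[|]] //= _; apply: Lj_nseq; lia.
Qed.

Lemma padnth_inj u u' : padnth u =1 padnth u' -> u = u'.
Proof.
move=> E; have size_uu' : size u = size u'.
  have := E (size u); have := E (size u'); rewrite /padnth !ltnn.
  by case: ltngtP.
apply: (eq_from_nth (x0 := 0) size_uu') => i lt_iu.
by have := E i; rewrite /padnth lt_iu -size_uu' lt_iu => -[].
Qed.

Lemma padnth_cat u w i :
  padnth (u ++ w) i = if i < size u then padnth u i else padnth w (i - size u).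
Proof.
rewrite /padnth size_cat nth_cat; case: (ltnP i (size u)) => [lt_iu | le_ui].
  by rewrite ltn_addr.
by rewrite ltn_subLR.
Qed.

Lemma nth_deltaR u v i : nth (None, None) (deltaR u v) i = (padnth u i, padnth v i).
Proof.
rewrite /deltaR; case: (ltnP i (maxn (size u) (size v))) => [lt_i | ].
  by rewrite nth_mkseq.
rewrite geq_max => /andP [le_ui le_vi].
by rewrite nth_default ?size_mkseq ?geq_max ?le_ui ?le_vi // /padnth !ltnNge le_ui le_vi.
Qed.

Lemma deltaR_inj u v u' v' : deltaR u v = deltaR u' v' -> u = u' /\ v = v'.
Proof.
move=> E; have Ei i := congr1 (nth (None, None) ^~ i) E.
by split; apply: padnth_inj => i; move: (Ei i); rewrite !nth_deltaR => -[].
Qed.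

Lemma deltaR_cat u w u' w' : size u = size u' ->
  deltaR (u ++ w) (u' ++ w') = deltaR u u' ++ deltaR w w'.
Proof.
move=> size_uu'; apply: (eq_from_nth (x0 := (None, None))) => [|i _].
  by rewrite size_cat !size_mkseq !size_cat -size_uu' maxnn addn_maxr.
rewrite nth_cat !nth_deltaR !padnth_cat size_mkseq -size_uu' maxnn.
by case: ltnP.
Qed.

Lemma lang_1L_deltaR_nseq n a b : 2 <= n ->
  lang_1L_deltaR n (deltaR (nseq a.+1 2 ++ nseq b.+1 1) (nseq a.+2 1 ++ nseq b.+1 2))
  <-> a = b.
Proof.
move=> n_ge2; split=> [[u [v [_ [_ [u_v /deltaR_inj [Eu Ev]]]]]] | <-].
  by rewrite -Eu -Ev in u_v; case/rps_equiv_1_2: u_v => -[->].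
exists (nseq a.+1 2 ++ nseq a.+1 1), (nseq a.+2 1 ++ nseq a.+1 2).
split; first exact: Lang_nseq21.
split; first exact: Lang_nseq12.
by rewrite /rps_equiv rps_Rr_1_2_1 rps_Rr_1_2.
Qed.

Theorem proposition6p4 (n : nat) : 2 <= n -> ~ regular (lang_1L_deltaR n).
Proof.
move=> n_ge2.
pose x a := deltaR (nseq a.+1 2) (nseq a.+1 1).
pose y b := deltaR (nseq b.+1 1) (1 :: nseq b.+1 2).
have x_y a b : x a ++ y b =
    deltaR (nseq a.+1 2 ++ nseq b.+1 1) (nseq a.+2 1 ++ nseq b.+1 2).
  rewrite -deltaR_cat ?size_nseq //; congr deltaR.
  by elim: a => //= a ->.
apply: (@not_regular_fooling _ _ x y) => [a | a b]; rewrite x_y.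
  exact/lang_1L_deltaR_nseq.
by move/lang_1L_deltaR_nseq => ->.
Qed.
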